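(* Let $\mathrm{M}$ be the 2-space group $\ast632$ (IT number 17, $p6m$), so that $E^2/\mathrm{M}$ is a $30^\circ$–$60^\circ$ right triangle. Then $\mathrm{Sym}(\mathrm{M})=\mathrm{Aff}(\mathrm{M})=\{\mathrm{idt.}\}$, and $\Omega:\mathrm{Aff}(\mathrm{M})\to\mathrm{Out}(\mathrm{M})$ is an isomorphism.
   Context: A 2-space group is a discrete group of isometries of $E^2$ with compact quotient. Affine maps of $E^2$ are written $a+A$ ($x\mapsto a+Ax$). For a 2-space group $\mathrm{M}$, let $N_A(\mathrm{M})$ be its normalizer in the affine group of $E^2$; each $a+A\in N_A(\mathrm{M})$ induces an affinity $(a+A)_\star:\mathrm{M}x\mapsto\mathrm{M}(a+Ax)$ of the flat orbifold $E^2/\mathrm{M}$. $\mathrm{Aff}(\mathrm{M})$ is the group of all such affinities and $\mathrm{Sym}(\mathrm{M})=\mathrm{Isom}(E^2/\mathrm{M})$ its subgroup of isometries; idt. is the identity. $\Omega:\mathrm{Aff}(\mathrm{M})\to\mathrm{Out}(\mathrm{M})$ sends $(a+A)_\star$ to the outer automorphism class of $g\mapsto(a+A)g(a+A)^{-1}$ on $\mathrm{M}$. *)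

From HB Require Import structures.
From mathcomp Require Import all_boot all_order all_algebra.
From mathcomp Require Import reals.
Set Implicit Arguments. Unset Strict Implicit. Unset Printing Implicit Defensive.
Import Order.TTheory GRing.Theory Num.Theory.
Local Open Scope ring_scope.

Section Wallpaper.
Variable R : realType.

Definition pt := 'cV[R]_2.

Definition affmap := (pt * 'M[R]_2)%type.
Definition app (f : affmap) (x : pt) : pt := f.1 + f.2 *m x.
Definition is_affine (f : affmap) : Prop := f.2 \in unitmx.
Definition is_isometry (f : affmap) : Prop := f.2^T *m f.2 = 1%:M.
Definition acomp (f g : affmap) : affmap := (f.1 + f.2 *m g.1, f.2 *m g.2).
Definition ainv (f : affmap) : affmap := (- (invmx f.2 *m f.1), invmx f.2).
Definition aid : affmap := (0, 1%:M).
Definition conj (f g : affmap) : affmap := acomp (acomp f g) (ainv f).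

Definition mx2 (a b c d : R) : 'M[R]_2 :=
  \matrix_(i < 2, j < 2)
     if (i == 0 :> nat) then (if (j == 0 :> nat) then a else b)
     else (if (j == 0 :> nat) then c else d).
Definition vec2 (a b : R) : pt := \col_(i < 2) if (i == 0 :> nat) then a else b.

Definition s3 : R := Num.sqrt 3.
Definition rot60 : 'M[R]_2 := mx2 (1/2) (- (s3 / 2)) (s3 / 2) (1/2).
Definition refl : 'M[R]_2 := mx2 1 0 0 (-1).
Definition in_D6 (A : 'M[R]_2) : Prop :=
  exists k : 'I_6, A = rot60 ^+ k \/ A = rot60 ^+ k *m refl.
Definition in_lattice (a : pt) : Prop :=
  exists m n : int, a = m%:~R *: vec2 1 0 + n%:~R *: vec2 (1/2) (s3 / 2).

(* The 2-space group *632 = p6m (IT 17): lattice translations composed with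
   the point group D6 fixing the origin (a 6-fold rotation centre). *)
Definition p6m (g : affmap) : Prop := in_lattice g.1 /\ in_D6 g.2.

Definition in_NA (M : affmap -> Prop) (f : affmap) : Prop :=
  is_affine f /\ forall g, M g <-> M (conj f g).

Definition orbit (M : affmap -> Prop) (x : pt) : pt -> Prop :=
  fun y => exists g, M g /\ y = app g x.
Definition orbifold (M : affmap -> Prop) :=
  {O : pt -> Prop | exists x, O = orbit M x}.
Definition cls (M : affmap -> Prop) (x : pt) : orbifold M :=
  exist _ (orbit M x) (ex_intro _ x erefl).

Definition induces (M : affmap -> Prop) (f : affmap) (F : orbifold M -> orbifold M)
  : Prop := forall x, F (cls M x) = cls M (app f x).

(* Aff(M) and Sym(M) = Isom(E^2/M) (the affinities induced by isometries
   in the normalizer) as sets of self-maps of the orbifold *)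
Definition Aff (M : affmap -> Prop) (F : orbifold M -> orbifold M) : Prop :=
  exists f, in_NA M f /\ induces f F.
Definition Sym (M : affmap -> Prop) (F : orbifold M -> orbifold M) : Prop :=
  exists f, in_NA M f /\ is_isometry f /\ induces f F.

Definition is_aut (M : affmap -> Prop) (phi : affmap -> affmap) : Prop :=
  (forall g, M g -> M (phi g)) /\
  (forall g h, M g -> M h -> phi g = phi h -> g = h) /\
  (forall h, M h -> exists g, M g /\ phi g = h) /\
  (forall g h, M g -> M h -> phi (acomp g h) = acomp (phi g) (phi h)).
Definition out_eq (M : affmap -> Prop) (phi psi : affmap -> affmap) : Prop :=
  exists h, M h /\ forall g, M g -> phi g = conj h (psi g).

End Wallpaper.
Arguments Aff {R} M F.
Arguments Sym {R} M F.
Arguments in_NA {R} M f.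
Arguments is_aut {R} M phi.
Arguments out_eq {R} M phi psi.

From Pilot Require Import Defs.
From HB Require Import structures.
From mathcomp Require Import all_boot all_order all_algebra.
From mathcomp Require Import reals boolp.
From mathcomp Require Import zify ring lra.
Import Order.TTheory GRing.Theory Num.Theory.
Local Open Scope ring_scope.
Set Implicit Arguments. Unset Strict Implicit. Unset Printing Implicit Defensive.

(* In lattice coordinates p6m is the integer group Z^2 ⋊ D6, where D6 is
   generated by the rotation ρ and the reflection σ.  Its translations are
   exactly the elements commuting with all their conjugates, so an automorphism
   ψ preserves them and acts on them by an integer matrix P.  Since
   ψ(ρ) t ψ(ρ)^-1 = ψ(ρ t ρ^-1), P intertwines the linear part of ψ(ρ) with
   that of ρ; this makes P the multiplication by an Eisenstein integer p,
   possibly followed by a reflection, and invertibility of P over Z forces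
   N(p) = 1, i.e. P ∈ D6.  The relations σ^2 = (σρ)^2 = 1 then pin down the
   translation parts of ψ(ρ) and ψ(σ), and an explicit element of p6m
   conjugates ψ to the identity: every automorphism is inner.
   An affine map normalizing p6m induces an automorphism, so it agrees with
   some h ∈ p6m up to an affine map centralizing p6m; that map fixes two
   independent lattice vectors and the rotation centre 0, hence is the
   identity.  So N_A(p6m) = p6m, and p6m acts trivially on its orbifold. *)

Ltac pairs := repeat match goal with |- (_, _) = (_, _) => congr pair end.

Lemma additive_intE (V : zmodType) (f : int -> V) :
  {morph f : a b / a + b} -> forall m, f m = f 1 *~ m.
Proof.
move=> fD; have f0 : f 0 = 0 by apply: (@addrI _ (f 0)); rewrite -fD !addr0.
have fN a : f (- a) = - f a by apply/eqP; rewrite -subr_eq0 opprK -fD addNr f0.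
have fn (n : nat) : f n = f 1 *~ n.
  by elim: n => [|n IH]; rewrite ?f0 // -addn1 PoszD fD IH mulrzDr.
by case=> n; rewrite ?NegzE ?fN ?mulrNz fn.
Qed.

(** * The integer model of p6m *)

(* [(a, b, c, d) : zmat] is the matrix [[a, b], [c, d]], acting on coordinates
   in the lattice basis (1, 0), (1/2, sqrt 3 / 2); in that basis [zrot] and
   [zrefl] are [rot60] and [refl]. *)
Definition zvec := (int * int)%type.
Definition zmat := (int * int * int * int)%type.

Lemma zvec0 : 0 = (0, 0) :> zvec. Proof. by []. Qed.

Lemma zvecD (x y x' y' : int) : (x, y) + (x', y') = (x + x', y + y') :> zvec.
Proof. by []. Qed.

Lemma zvecN (x y : int) : - (x, y) = (- x, - y) :> zvec.
Proof. by []. Qed.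

Lemma zvecMz (a b m : int) : (a * m, b * m) = (a, b) *~ m :> zvec.
Proof.
rewrite (@additive_intE _ (fun m => (a * m, b * m))) ?mulr1 // => x y.
by rewrite !mulrDr.
Qed.

Lemma zmatE (a b c d a' b' c' d' : int) :
  (a, b, c, d) = (a', b', c', d') :> zmat <-> [/\ a = a', b = b', c = c' & d = d'].
Proof. by split=> [[-> -> -> ->] | [-> -> -> ->]]. Qed.

Definition zmulmv (A : zmat) (v : zvec) : zvec :=
  let '(a, b, c, d) := A in (a * v.1 + b * v.2, c * v.1 + d * v.2).
Definition zmulmm (A B : zmat) : zmat :=
  let '(a, b, c, d) := A in let '(a', b', c', d') := B in
  (a * a' + b * c', a * b' + b * d', c * a' + d * c', c * b' + d * d').
Definition zmat1 : zmat := (1, 0, 0, 1).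
Arguments zmulmv : simpl never.
Arguments zmulmm : simpl never.

Definition zrot : zmat := (0, -1, 1, 1).
Definition zrefl : zmat := (1, 1, 0, -1).
Definition D6Z : seq zmat :=
  [:: (1, 0, 0, 1); (0, -1, 1, 1); (-1, -1, 1, 0); (-1, 0, 0, -1);
      (0, 1, -1, -1); (1, 1, -1, 0); (1, 1, 0, -1); (0, 1, 1, 0);
      (-1, 0, 1, 1); (-1, -1, 0, 1); (0, -1, -1, 0); (1, 0, -1, -1)].

Definition zaff := (zvec * zmat)%type.
Definition zcomp (x y : zaff) : zaff := (x.1 + zmulmv x.2 y.1, zmulmm x.2 y.2).
Definition zid : zaff := (0, zmat1).
Definition ztr (v : zvec) : zaff := (v, zmat1).
Definition zrho : zaff := (0, zrot).
Definition zsig : zaff := (0, zrefl).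
Definition in_p6mZ (x : zaff) : bool := x.2 \in D6Z.

Lemma D6Z_ind (P : zmat -> Prop) :
  P (1, 0, 0, 1) -> P (0, -1, 1, 1) -> P (-1, -1, 1, 0) -> P (-1, 0, 0, -1) ->
  P (0, 1, -1, -1) -> P (1, 1, -1, 0) -> P (1, 1, 0, -1) -> P (0, 1, 1, 0) ->
  P (-1, 0, 1, 1) -> P (-1, -1, 0, 1) -> P (0, -1, -1, 0) -> P (1, 0, -1, -1) ->
  forall A, A \in D6Z -> P A.
Proof.
move=> P1 P2 P3 P4 P5 P6 P7 P8 P9 P10 P11 P12 A; rewrite !inE.
by do 11 (case/orP; [by move/eqP->|]); move/eqP->.
Qed.

Lemma D6Z_mul A B : A \in D6Z -> B \in D6Z -> zmulmm A B \in D6Z.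
Proof.
have /allP closed : all (fun A => all (fun B => zmulmm A B \in D6Z) D6Z) D6Z.
  by vm_compute.
by move=> /closed /allP; apply.
Qed.

Lemma D6Z_inv A : A \in D6Z ->
  exists2 B, B \in D6Z & zmulmm B A = zmat1 /\ zmulmm A B = zmat1.
Proof.
have /allP invertible : all (fun A => has (fun B =>
    (zmulmm B A == zmat1) && (zmulmm A B == zmat1)) D6Z) D6Z.
  by vm_compute.
by move=> /invertible /hasP [B hB /andP [/eqP BA /eqP AB]]; exists B.
Qed.

Lemma zmulmvA A B v : zmulmv (zmulmm A B) v = zmulmv A (zmulmv B v).
Proof.
case: A B v => [[[a b] c] d] [[[a' b'] c'] d'] [x y].
by rewrite /zmulmv /zmulmm /=; pairs; ring.
Qed.

Lemma zmulmvD A v w : zmulmv A (v + w) = zmulmv A v + zmulmv A w.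
Proof.
by case: A v w => [[[a b] c] d] [x y] [x' y']; rewrite /zmulmv /= !zvecD; pairs; ring.
Qed.

Lemma zmulmvN A v : zmulmv A (- v) = - zmulmv A v.
Proof. by case: A v => [[[a b] c] d] [x y]; rewrite /zmulmv /= !zvecN; pairs; ring. Qed.

Lemma zmul1mv v : zmulmv zmat1 v = v.
Proof. by case: v => x y; rewrite /zmulmv /zmulmm /=; pairs; ring. Qed.

Lemma zmulmmA A B C : zmulmm (zmulmm A B) C = zmulmm A (zmulmm B C).
Proof.
case: A B C => [[[a b] c] d] [[[a' b'] c'] d'] [[[a'' b''] c''] d''].
by rewrite /zmulmv /zmulmm /=; pairs; ring.
Qed.

Lemma zmulmm1 A : zmulmm A zmat1 = A.
Proof. by case: A => [[[a b] c] d]; rewrite /zmulmv /zmulmm /=; pairs; ring. Qed.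

Lemma zmul1mm A : zmulmm zmat1 A = A.
Proof. by case: A => [[[a b] c] d]; rewrite /zmulmv /zmulmm /=; pairs; ring. Qed.

Lemma zmat_ext A B : (forall v, zmulmv A v = zmulmv B v) -> A = B.
Proof.
case: A B => [[[a b] c] d] [[[a' b'] c'] d'] AB.
move: (AB (1, 0)) (AB (0, 1)); rewrite /zmulmv /= => -[e1 e2] [e3 e4].
by pairs; lia.
Qed.

Lemma zcompA x y z : zcomp (zcomp x y) z = zcomp x (zcomp y z).
Proof. by rewrite /zcomp /= zmulmvD zmulmvA zmulmmA addrA. Qed.

Lemma zcomp1x x : zcomp zid x = x.
Proof.
case: x => [[x y] [[[a b] c] d]].
by rewrite /zcomp /zmulmv /zmulmm /= add0r; pairs; ring.
Qed.

Lemma p6mZ_comp x y : in_p6mZ x -> in_p6mZ y -> in_p6mZ (zcomp x y).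
Proof. exact: D6Z_mul. Qed.

Lemma p6mZ_inv x : in_p6mZ x ->
  exists2 y, in_p6mZ y & zcomp y x = zid /\ zcomp x y = zid.
Proof.
case: x => v A /D6Z_inv [B hB [BA AB]]; exists (- zmulmv B v, B) => //.
by rewrite /zcomp /= BA AB zmulmvN -zmulmvA AB zmul1mv addNr subrr.
Qed.

Lemma p6mZ_id : in_p6mZ zid. Proof. by []. Qed.

Lemma p6mZ_tr v : in_p6mZ (ztr v). Proof. by []. Qed.

Lemma ztrD v w : zcomp (ztr v) (ztr w) = ztr (v + w).
Proof. by rewrite /zcomp zmul1mv zmulmm1. Qed.

Lemma zcomp_trC x v : zcomp x (ztr v) = zcomp (ztr (zmulmv x.2 v)) x.
Proof. by rewrite /zcomp zmul1mv zmulmm1 zmul1mm addrC. Qed.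

Lemma zcomp_tr_inj x a b :
  zcomp x (ztr a) = zcomp (ztr b) x -> zmulmv x.2 a = b.
Proof. by rewrite zcomp_trC /zcomp /= !zmul1mv => /(congr1 fst) /addIr. Qed.

Definition commutes_with_conjugates (x : zaff) : Prop :=
  forall y z, in_p6mZ y -> in_p6mZ z -> zcomp y z = zid ->
  zcomp x (zcomp (zcomp y x) z) = zcomp (zcomp (zcomp y x) z) x.

Lemma ztrC v w : zcomp (ztr v) (ztr w) = zcomp (ztr w) (ztr v).
Proof. by rewrite !ztrD addrC. Qed.

Lemma p6mZ_translationP x :
  in_p6mZ x -> x.2 = zmat1 <-> commutes_with_conjugates x.
Proof.
case: x => v A; rewrite /in_p6mZ /= => hA; split.
  move=> -> y z _ _ /(congr1 snd) /= yz.
  have -> : zcomp (zcomp y (ztr v)) z = ztr (zcomp (zcomp y (ztr v)) z).1.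
    by rewrite /zcomp /= zmulmm1 yz.
  exact: ztrC.
move=> comm.
have := comm (ztr (1, 0)) (ztr (-1, 0)) erefl erefl (ztrD _ _).
have := comm (ztr (0, 1)) (ztr (0, -1)) erefl erefl (ztrD _ _).
case: v {comm} => v1 v2; move: A hA; apply: D6Z_ind;
  rewrite /zcomp /zmulmv /zmulmm /= ?zvecD /=;
  move=> /pair_equal_spec [/pair_equal_spec [e1 e2] _];
  move=> /pair_equal_spec [/pair_equal_spec [e3 e4] _];
  first [done | exfalso; lia].
Qed.

(* [eis_mx p] is the multiplication by the Eisenstein integer p.1 + p.2 ζ,
   ζ = exp(iπ/3), in the lattice basis; [hex_norm] is the norm. *)
Definition hex_norm (v : zvec) : int := v.1 * v.1 + v.1 * v.2 + v.2 * v.2.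
Definition eis_mx (p : zvec) : zmat := (p.1, - p.2, p.2, p.1 + p.2).
Definition zrotV : zmat := (1, 1, -1, 0).

Lemma hex_norm_ge0 v : 0 <= hex_norm v.
Proof. rewrite /hex_norm; nia. Qed.

Lemma hex_norm_eis p v : hex_norm (zmulmv (eis_mx p) v) = hex_norm p * hex_norm v.
Proof. by case: p v => [p1 p2] [v1 v2]; rewrite /hex_norm /zmulmv /=; ring. Qed.

Lemma eis_mx_D6Z p : hex_norm p = 1 -> eis_mx p \in D6Z.
Proof.
case: p => x y; rewrite /hex_norm /= => N1.
have xy : (x = -1 \/ x = 0 \/ x = 1) /\ (y = -1 \/ y = 0 \/ y = 1) by nia.
by move: N1; case: xy => [[->|[->|->]] [->|[->|->]]] /eqP; vm_compute.
Qed.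

Lemma eis_mx_unit p v : zmulmv (eis_mx p) v = (1, 0) -> eis_mx p \in D6Z.
Proof.
move=> /(congr1 hex_norm); rewrite hex_norm_eis [hex_norm (1, 0)]/hex_norm /=.
move=> N1; apply: eis_mx_D6Z; move: N1 (hex_norm_ge0 p) (hex_norm_ge0 v).
case: (hex_norm p) => // a; case: (hex_norm v) => // b.
by move=> /eqP; rewrite -PoszM eqz_nat muln_eq1 => /andP [/eqP-> _].
Qed.

Lemma rot_intertwiner_cases R P v :
  R \in D6Z -> zmulmv P v = (1, 0) -> zmulmm R P = zmulmm P zrot ->
  R = zrot \/ R = zrotV.
Proof.
case: P => [[[p1 q1] p2] q2] + Pv; move: R; apply: D6Z_ind;
  rewrite /zmulmm => /zmatE [e1 e2 e3 e4];
  first [by left | by right | exfalso].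
all: have [p0 q0] : p1 = 0 /\ q1 = 0 by lia.
all: by move: Pv; rewrite /zmulmv p0 q0 /= => /(congr1 fst); rewrite /= !mul0r addr0.
Qed.

Lemma rot_intertwiner_D6Z R P v :
  R \in D6Z -> zmulmv P v = (1, 0) -> zmulmm R P = zmulmm P zrot -> P \in D6Z.
Proof.
move=> hR Pv RP; have [] := rot_intertwiner_cases hR Pv RP => RE.
  move: RP Pv; rewrite RE; case: P => [[[p1 q1] p2] q2] /zmatE [e1 e2 e3 e4].
  have -> : (p1, q1, p2, q2) = eis_mx (p1, p2) by rewrite /eis_mx /=; pairs; lia.
  exact: eis_mx_unit.
move: RP Pv; rewrite RE; case: P => [[[p1 q1] p2] q2] /zmatE [e1 e2 e3 e4].
have -> : (p1, q1, p2, q2) = zmulmm (eis_mx (p1, p2)) zrefl.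
  by rewrite /eis_mx /zmulmm /=; pairs; lia.
by rewrite zmulmvA => /eis_mx_unit /D6Z_mul; apply.
Qed.

Lemma D6Z_conj_witness R S P u w :
  R \in D6Z -> S \in D6Z -> P \in D6Z ->
  zmulmm R P = zmulmm P zrot -> zmulmm S P = zmulmm P zrefl ->
  zcomp (w, S) (w, S) = zid ->
  zcomp (zcomp (w, S) (u, R)) (zcomp (w, S) (u, R)) = zid ->
  zcomp (u, R) (zmulmv R u, P) = zcomp (zmulmv R u, P) zrho /\
  zcomp (w, S) (zmulmv R u, P) = zcomp (zmulmv R u, P) zsig.
Proof.
move=> hR hS hP /eqP RP /eqP SP.
(* Once P is fixed, the intertwining relations determine R and S, and the two
   involution relations become linear constraints on u and w. *)
move: P hP RP SP; apply: D6Z_ind => RP SP;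
  move: R hR RP; apply: D6Z_ind => RP; vm_compute in RP => //;
  move: S hS SP; apply: D6Z_ind => SP; vm_compute in SP => //.
all: case: u w => [u1 u2] [w1 w2].
all: rewrite /zcomp /zmulmv /zmulmm /zid /zrho /zsig /= ?zvecD ?zvec0 /=.
all: move=> /pair_equal_spec [/pair_equal_spec [e1 e2] _].
all: move=> /pair_equal_spec [/pair_equal_spec [e3 e4] _].
all: by split; pairs; lia.
Qed.

Definition zrho_pow (k : nat) : zaff := iter k (zcomp zrho) zid.

Lemma p6mZ_rho_pow k : in_p6mZ (zrho_pow k).
Proof. by elim: k => [|k IH] //=; apply: p6mZ_comp. Qed.

Lemma D6Z_rho_sig A : A \in D6Z ->
  exists2 k, (k < 6)%N & (0, A) = zrho_pow k \/ (0, A) = zcomp (zrho_pow k) zsig.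
Proof.
have /allP gen : all (fun A => has (fun k =>
    ((0, A) == zrho_pow k) || ((0, A) == zcomp (zrho_pow k) zsig)) (iota 0 6)) D6Z.
  by vm_compute.
move=> /gen /hasP [k]; rewrite mem_iota => /andP [_ k6] /orP [] /eqP; exists k => //.
- by left.
- by right.
Qed.

Lemma p6mZ_ind (Q : zaff -> Prop) :
  (forall v, Q (ztr v)) -> Q zrho -> Q zsig ->
  (forall x y, in_p6mZ x -> in_p6mZ y -> Q x -> Q y -> Q (zcomp x y)) ->
  forall x, in_p6mZ x -> Q x.
Proof.
move=> Qtr Qrho Qsig Qcomp [v A] hA.
have Qpow k : Q (zrho_pow k).
  by elim: k => [|k IH] /=; [apply: Qtr | apply: (Qcomp) => //; apply: p6mZ_rho_pow].
have -> : (v, A) = zcomp (ztr v) (0, A) by rewrite /zcomp zmul1mv zmul1mm addr0.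
apply: (Qcomp) => //; have [k _ [->|->]] := D6Z_rho_sig hA => //.
by apply: (Qcomp) => //; apply: p6mZ_rho_pow.
Qed.

(** * Automorphisms of the integer model are inner *)

Record zaut (psi : zaff -> zaff) : Prop := ZAut {
  zaut_in : forall x, in_p6mZ x -> in_p6mZ (psi x);
  zaut_inj : forall x y, in_p6mZ x -> in_p6mZ y -> psi x = psi y -> x = y;
  zaut_surj : forall y, in_p6mZ y -> exists2 x, in_p6mZ x & psi x = y;
  zaut_comp : forall x y, in_p6mZ x -> in_p6mZ y ->
    psi (zcomp x y) = zcomp (psi x) (psi y) }.

Section Automorphism.
Variable psi : zaff -> zaff.
Hypothesis psiA : zaut psi.

Ltac p6mZ_closed := solve [repeat first
  [ apply: p6mZ_comp | apply: (zaut_in psiA) | apply: p6mZ_id | apply: p6mZ_tr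
  | assumption ]].

Lemma zaut_id : psi zid = zid.
Proof.
have ee : zcomp (psi zid) (psi zid) = psi zid.
  by rewrite -(zaut_comp psiA) // zcomp1x.
have [y _ [ye _]] := p6mZ_inv (zaut_in psiA p6mZ_id).
set e := psi zid in ee ye *.
by rewrite -[LHS]zcomp1x -ye zcompA ee.
Qed.

Lemma zaut_rel x y x' y' : in_p6mZ x -> in_p6mZ y -> in_p6mZ x' -> in_p6mZ y' ->
  zcomp x y = zcomp x' y' -> zcomp (psi x) (psi y) = zcomp (psi x') (psi y').
Proof. by move=> ? ? ? ? e; rewrite -!(zaut_comp psiA) // e. Qed.

Lemma zaut_commutes_with_conjugates x : in_p6mZ x ->
  commutes_with_conjugates (psi x) <-> commutes_with_conjugates x.
Proof.
move=> hx; split=> comm y z hy hz.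
  move=> yz; apply: (zaut_inj psiA); try p6mZ_closed.
  rewrite !(zaut_comp psiA); try p6mZ_closed.
  by apply: comm; try p6mZ_closed; rewrite -(zaut_comp psiA) // yz zaut_id.
have [y' hy' <-] := zaut_surj psiA hy; have [z' hz' <-] := zaut_surj psiA hz.
move=> yz; rewrite -!(zaut_comp psiA); try p6mZ_closed.
congr psi; apply: comm => //; apply: (zaut_inj psiA); try p6mZ_closed.
by rewrite (zaut_comp psiA) // yz zaut_id.
Qed.

Lemma zaut_translation x : in_p6mZ x -> (psi x).2 = zmat1 <-> x.2 = zmat1.
Proof.
move=> hx; rewrite (p6mZ_translationP hx) (p6mZ_translationP (zaut_in psiA hx)).
exact: zaut_commutes_with_conjugates.
Qed.

Lemma zaut_tr v : psi (ztr v) = ztr (psi (ztr v)).1.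
Proof.
have := proj2 (zaut_translation (p6mZ_tr v)) erefl.
by case: (psi (ztr v)) => a A /= ->.
Qed.

Definition zaut_mx : zmat :=
  let p := (psi (ztr (1, 0))).1 in let q := (psi (ztr (0, 1))).1 in
  (p.1, q.1, p.2, q.2).

Lemma zaut_trE v : psi (ztr v) = ztr (zmulmv zaut_mx v).
Proof.
pose s v := (psi (ztr v)).1.
have sD : {morph s : v w / v + w}.
  by move=> a b; rewrite /s -ztrD (zaut_comp psiA) // (zaut_tr a) (zaut_tr b) ztrD.
rewrite zaut_tr -/(s v); congr ztr.
have -> : v = (v.1, 0) + (0, v.2) by case: v => a b; rewrite zvecD addr0 add0r.
rewrite sD (@additive_intE _ (fun m => s (m, 0))); last first.
  by move=> a b; rewrite -sD zvecD addr0.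
rewrite (@additive_intE _ (fun m => s (0, m))); last first.
  by move=> a b; rewrite -sD zvecD addr0.
rewrite /zaut_mx /s /zmulmv /=.
case: (psi (ztr (1, 0))).1 => p1 p2; case: (psi (ztr (0, 1))).1 => q1 q2 /=.
by rewrite -!zvecMz zvecD; pairs; ring.
Qed.

Lemma zaut_mx_surj : exists v, zmulmv zaut_mx v = (1, 0).
Proof.
have [g hg eg] := zaut_surj psiA (p6mZ_tr (1, 0)).
have : g.2 = zmat1 by apply/(zaut_translation hg); rewrite eg.
case: g hg eg => v A _ + A1; rewrite (A1 : A = zmat1) -/(ztr v) zaut_trE.
by move=> /(congr1 fst) Pv; exists v.
Qed.

Lemma zaut_intertwine x :
  in_p6mZ x -> zmulmm (psi x).2 zaut_mx = zmulmm zaut_mx x.2.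
Proof.
move=> hx; apply: zmat_ext => v; rewrite !zmulmvA.
have := zaut_rel hx (p6mZ_tr v) (p6mZ_tr _) hx (zcomp_trC x v).
by rewrite !zaut_trE => /zcomp_tr_inj.
Qed.

Theorem zaut_inner :
  exists2 h, in_p6mZ h & forall x, in_p6mZ x -> zcomp (psi x) h = zcomp h x.
Proof.
have hrho := zaut_in psiA (erefl : in_p6mZ zrho).
have hsig := zaut_in psiA (erefl : in_p6mZ zsig).
have [v Pv] := zaut_mx_surj.
have hP := rot_intertwiner_D6Z hrho Pv (zaut_intertwine (erefl : in_p6mZ zrho)).
have sig2 : zcomp (psi zsig) (psi zsig) = zid.
  by rewrite -zaut_id -(zaut_comp psiA).
have sigrho2 : zcomp (zcomp (psi zsig) (psi zrho)) (zcomp (psi zsig) (psi zrho)) = zid.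
  by rewrite -zaut_id -!(zaut_comp psiA) //; apply: p6mZ_comp.
move: (zaut_intertwine (erefl : in_p6mZ zrho)) (zaut_intertwine (erefl : in_p6mZ zsig)).
case Erho : (psi zrho) hrho sig2 sigrho2 => [u R].
case Esig : (psi zsig) hsig => [w S].
move=> hS hR sig2 sigrho2 RP SP.
have [crho csig] := D6Z_conj_witness hR hS hP RP SP sig2 sigrho2.
exists (zmulmv R u, zaut_mx) => //; apply: p6mZ_ind => //.
- by move=> a; rewrite zaut_trE /zcomp !zmul1mv zmul1mm zmulmm1 addrC.
- by rewrite Erho.
- by rewrite Esig.
- move=> x y hx hy cx cy.
  by rewrite (zaut_comp psiA) // zcompA cy -zcompA cx zcompA.
Qed.
End Automorphism.

(** * Realization in the affine group *)

Section Realization.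
Context {R : realType}.
Local Notation s3 := (s3 R).
Local Notation vec2 := (@vec2 R).
Local Notation mx2 := (@mx2 R).

Lemma mx2_mul a b c d a' b' c' d' : mx2 a b c d *m mx2 a' b' c' d' =
  mx2 (a * a' + b * c') (a * b' + b * d') (c * a' + d * c') (c * b' + d * d').
Proof.
apply/matrixP => i j; rewrite !mxE !big_ord_recl big_ord0 !mxE /=.
by case: (i == 0 :> nat); case: (j == 0 :> nat); rewrite addr0.
Qed.

Lemma mx2_vec2 a b c d x y :
  mx2 a b c d *m vec2 x y = vec2 (a * x + b * y) (c * x + d * y).
Proof.
apply/matrixP => i j; rewrite !mxE !big_ord_recl big_ord0 !mxE /=.
by case: (i == 0 :> nat); rewrite addr0.
Qed.

Lemma mx2E (X : 'M[R]_2) : X = mx2 (X 0 0) (X 0 1) (X 1 0) (X 1 1).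
Proof.
apply/matrixP => i j; rewrite !mxE.
case: i => [[|[|i]] hi] //; case: j => [[|[|j]] hj] //=.
all: by congr (X _ _); apply: val_inj.
Qed.

Lemma vec2E (x : pt R) : x = vec2 (x 0 0) (x 1 0).
Proof.
apply/matrixP => i j; rewrite !mxE.
by case: i => [[|[|i]] hi] //; case: j => [[|j] hj] //=; congr (x _ _); apply: val_inj.
Qed.

Lemma mx2_inj a b c d a' b' c' d' : mx2 a b c d = mx2 a' b' c' d' ->
  [/\ a = a', b = b', c = c' & d = d'].
Proof.
move=> /matrixP e; move: (e 0 0) (e 0 1) (e 1 0) (e 1 1); rewrite !mxE /=.
by move=> -> -> -> ->.
Qed.

Lemma vec2_inj a b a' b' : vec2 a b = vec2 a' b' -> a = a' /\ b = b'.
Proof. by move=> /matrixP e; move: (e 0 0) (e 1 0); rewrite !mxE /= => -> ->. Qed.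

Lemma mx2_1 : 1%:M = mx2 1 0 0 1.
Proof.
apply/matrixP => i j; rewrite !mxE.
by case: i => [[|[|i]] hi] //; case: j => [[|[|j]] hj].
Qed.

Lemma vec2D a b c d : vec2 a b + vec2 c d = vec2 (a + c) (b + d).
Proof. by apply/matrixP => i j; rewrite !mxE; case: (i == 0 :> nat). Qed.

Lemma vec2Z k a b : k *: vec2 a b = vec2 (k * a) (k * b).
Proof. by apply/matrixP => i j; rewrite !mxE; case: (i == 0 :> nat). Qed.

Lemma vec2_0 : 0 = vec2 0 0.
Proof. by apply/matrixP => i j; rewrite !mxE; case: (i == 0 :> nat). Qed.

Lemma s3_sqr : s3 * s3 = 3.
Proof. by rewrite /s3 -expr2 sqr_sqrtr // ler0n. Qed.

Lemma s3_neq0 : s3 != 0.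
Proof.
by apply/eqP => s0; have := s3_sqr; rewrite s0 mul0r => /eqP; rewrite eq_sym pnatr_eq0.
Qed.

Definition basis_mx : 'M[R]_2 := mx2 1 (1 / 2) 0 (s3 / 2).
Definition basis_mx_inv : 'M[R]_2 := mx2 1 (- (s3 / 3)) 0 (2 * s3 / 3).

Definition zmat_real (A : zmat) : 'M[R]_2 :=
  let '(a, b, c, d) := A in mx2 a%:~R b%:~R c%:~R d%:~R.
Definition zvec_real (v : zvec) : pt R := vec2 v.1%:~R v.2%:~R.
Definition lat_pt (v : zvec) : pt R :=
  v.1%:~R *: vec2 1 0 + v.2%:~R *: vec2 (1 / 2) (s3 / 2).
Definition lin_real (A : zmat) : 'M[R]_2 := basis_mx *m zmat_real A *m basis_mx_inv.
Definition embed (x : zaff) : affmap R := (lat_pt x.1, lin_real x.2).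

Lemma basis_mxK : basis_mx_inv *m basis_mx = 1%:M.
Proof.
by rewrite /basis_mx /basis_mx_inv mx2_mul mx2_1; have s3s3 := s3_sqr; congr mx2; lra.
Qed.

Lemma basis_mxVK : basis_mx *m basis_mx_inv = 1%:M.
Proof.
by rewrite /basis_mx /basis_mx_inv mx2_mul mx2_1; have s3s3 := s3_sqr; congr mx2; lra.
Qed.

Lemma zmat_realM A B : zmat_real (zmulmm A B) = zmat_real A *m zmat_real B.
Proof.
case: A B => [[[a b] c] d] [[[a' b'] c'] d'].
by rewrite /zmulmm /zmat_real mx2_mul !intrD !intrM.
Qed.

Lemma zmat_real_vec A v : zmat_real A *m zvec_real v = zvec_real (zmulmv A v).
Proof.
case: A v => [[[a b] c] d] [x y].
by rewrite /zmulmv /zmat_real /zvec_real mx2_vec2 /= !intrD !intrM.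
Qed.

Lemma lat_ptE v : lat_pt v = basis_mx *m zvec_real v.
Proof.
case: v => x y; rewrite /lat_pt /zvec_real mx2_vec2 !vec2Z vec2D /=.
by congr vec2; ring.
Qed.

Lemma lin_realM A B : lin_real (zmulmm A B) = lin_real A *m lin_real B.
Proof.
by rewrite /lin_real zmat_realM !mulmxA -(mulmxA _ basis_mx_inv) basis_mxK mulmx1.
Qed.

Lemma lin_real_lat A v : lin_real A *m lat_pt v = lat_pt (zmulmv A v).
Proof.
rewrite !lat_ptE /lin_real -!mulmxA (mulmxA basis_mx_inv) basis_mxK mul1mx.
by rewrite zmat_real_vec.
Qed.

Lemma lin_real1 : lin_real zmat1 = 1%:M.
Proof.
rewrite /lin_real; have -> : zmat_real zmat1 = 1%:M.
  by rewrite mx2_1 /zmat_real /= mulr1z mulr0z.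
by rewrite mulmx1 basis_mxVK.
Qed.

Lemma lin_real_inj : injective lin_real.
Proof.
have lin_realK A : basis_mx_inv *m lin_real A *m basis_mx = zmat_real A.
  by rewrite /lin_real !mulmxA basis_mxK mul1mx -mulmxA basis_mxK mulmx1.
move=> [[[a b] c] d] [[[a' b'] c'] d'].
move=> /(congr1 (fun X => basis_mx_inv *m X *m basis_mx)); rewrite /= !lin_realK.
by move=> /mx2_inj [/intr_inj -> /intr_inj -> /intr_inj -> /intr_inj ->].
Qed.

Lemma lat_pt_inj : injective lat_pt.
Proof.
move=> [x y] [x' y']; rewrite /lat_pt !vec2Z !vec2D /= => /vec2_inj [e1 e2].
have s3_2 : s3 / 2 != 0 by rewrite mulf_neq0 ?s3_neq0 // invr_eq0 pnatr_eq0.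
have ey : y%:~R = y'%:~R :> R by apply: (mulIf s3_2) => /=; lra.
have ex : x%:~R = x'%:~R :> R by rewrite ey in e1; lra.
by rewrite (intr_inj ex) (intr_inj ey).
Qed.

Lemma lat_ptD v w : lat_pt (v + w) = lat_pt v + lat_pt w.
Proof.
case: v w => [x y] [x' y']; rewrite /lat_pt zvecD !vec2Z !vec2D /= !intrD.
by congr vec2; ring.
Qed.

Lemma lat_pt0 : lat_pt 0 = 0.
Proof. by rewrite /lat_pt /= !scale0r addr0. Qed.

Lemma lin_real_rot : lin_real zrot = rot60 R.
Proof.
have : rot60 R *m basis_mx = basis_mx *m zmat_real zrot.
  rewrite /rot60 /basis_mx /zmat_real /zrot !mx2_mul.
  by have s3s3 := s3_sqr; congr mx2; lra.
by rewrite /lin_real => <-; rewrite -mulmxA basis_mxVK mulmx1.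
Qed.

Lemma lin_real_refl : lin_real zrefl = refl R.
Proof.
have : refl R *m basis_mx = basis_mx *m zmat_real zrefl.
  by rewrite /refl /basis_mx /zmat_real /zrefl !mx2_mul; congr mx2; lra.
by rewrite /lin_real => <-; rewrite -mulmxA basis_mxVK mulmx1.
Qed.

Lemma fix_lattice_basis (A : 'M[R]_2) :
  A *m vec2 1 0 = vec2 1 0 -> A *m vec2 (1 / 2) (s3 / 2) = vec2 (1 / 2) (s3 / 2) ->
  A = 1%:M.
Proof.
rewrite [A]mx2E !mx2_vec2 mx2_1 => /vec2_inj [e1 e2] /vec2_inj [e3 e4].
have s3_2 : s3 / 2 != 0 by rewrite mulf_neq0 ?s3_neq0 // invr_eq0 pnatr_eq0.
have b0 : A 0 1 * (s3 / 2) = 0 by lra.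
have d1 : (A 1 1 - 1) * (s3 / 2) = 0 by lra.
move: b0 d1 => /eqP; rewrite mulf_eq0 (negbTE s3_2) orbF => /eqP ->.
move=> /eqP; rewrite mulf_eq0 (negbTE s3_2) orbF subr_eq0 => /eqP ->.
by congr mx2; lra.
Qed.

Lemma rot60_fix (x : pt R) : rot60 R *m x = x -> x = 0.
Proof.
rewrite [x]vec2E /rot60 mx2_vec2 vec2_0 => /vec2_inj [e1 e2].
have x0 : x 0 0 = - (s3 * x 1 0) by lra.
have y0 : x 1 0 = 0.
  have : x 1 0 = s3 * x 0 0 by lra.
  by rewrite x0 mulrN mulrA s3_sqr => ?; lra.
by rewrite x0 y0 mulr0 oppr0.
Qed.

End Realization.

Section AffineGroup.
Context {R : realType}.
Implicit Types f g h : affmap R.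

Lemma acompA f g h : acomp (acomp f g) h = acomp f (acomp g h).
Proof. by rewrite /acomp /= mulmxDr !mulmxA addrA. Qed.

Lemma acomp1f f : acomp (aid R) f = f.
Proof. by case: f => a A; rewrite /acomp /= add0r !mul1mx. Qed.

Lemma acompf1 f : acomp f (aid R) = f.
Proof. by case: f => a A; rewrite /acomp /= mulmx0 addr0 mulmx1. Qed.

Lemma acompV f : f.2 \in unitmx -> acomp f (ainv f) = aid R.
Proof.
by case: f => a A /= hA; rewrite /acomp /= mulmxN mulmxA mulmxV // mul1mx subrr.
Qed.

Lemma acompVl f : f.2 \in unitmx -> acomp (ainv f) f = aid R.
Proof. by case: f => a A /= hA; rewrite /acomp /= mulVmx // addrC subrr. Qed.

Lemma ainv_unit f : f.2 \in unitmx -> (ainv f).2 \in unitmx.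
Proof. by rewrite unitmx_inv. Qed.

Lemma acomp_unit f g : f.2 \in unitmx -> g.2 \in unitmx -> (acomp f g).2 \in unitmx.
Proof. by rewrite /= unitmx_mul => -> ->. Qed.

Lemma ainv_uniq f g : f.2 \in unitmx -> acomp f g = aid R -> g = ainv f.
Proof. by move=> hf fg; rewrite -[g]acomp1f -(acompVl hf) acompA fg acompf1. Qed.

Lemma conj_aid g : conj (aid R) g = g.
Proof.
rewrite /conj; have -> : ainv (aid R) = aid R by rewrite /ainv /= invmx1 mulmx0 oppr0.
by rewrite acomp1f acompf1.
Qed.

Lemma ainvM f g : f.2 \in unitmx -> g.2 \in unitmx ->
  ainv (acomp f g) = acomp (ainv g) (ainv f).
Proof.
move=> hf hg; symmetry; apply: ainv_uniq; first exact: acomp_unit.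
by rewrite acompA -(acompA g) acompV // acomp1f acompV.
Qed.

Lemma conjM f1 f2 g : f1.2 \in unitmx -> f2.2 \in unitmx ->
  conj (acomp f1 f2) g = conj f1 (conj f2 g).
Proof. by move=> h1 h2; rewrite /conj ainvM // !acompA. Qed.

Lemma conjVK f g : f.2 \in unitmx -> conj (ainv f) (conj f g) = g.
Proof. by move=> hf; rewrite -conjM ?ainv_unit // acompVl // conj_aid. Qed.

Lemma conjKV f g : f.2 \in unitmx -> conj f (conj (ainv f) g) = g.
Proof. by move=> hf; rewrite -conjM ?ainv_unit // acompV // conj_aid. Qed.

Lemma conj_acomp f g h : f.2 \in unitmx ->
  conj f (acomp g h) = acomp (conj f g) (conj f h).
Proof.
move=> hf; rewrite /conj !acompA; congr acomp; congr acomp.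
by rewrite -acompA acompVl // acomp1f.
Qed.

Lemma app_acomp f g x : app (acomp f g) x = app f (app g x).
Proof. by rewrite /app /acomp /= mulmxDr mulmxA addrA. Qed.

End AffineGroup.

(** * The affine normalizer of p6m *)

Section P6m.
Context {R : realType}.
Local Notation M := (@p6m R).
Local Notation embed := (@embed R).
Implicit Types f g h : affmap R.

Lemma embedM x y : embed (zcomp x y) = acomp (embed x) (embed y).
Proof. by rewrite /embed /acomp /= lat_ptD lin_real_lat lin_realM. Qed.

Lemma embed_id : embed zid = aid R.
Proof. by rewrite /embed /= lat_pt0 lin_real1. Qed.

Lemma embed_inj : injective embed.
Proof. by move=> [v A] [w B] [/lat_pt_inj -> /lin_real_inj ->]. Qed.

Lemma embed_unit x : in_p6mZ x -> (embed x).2 \in unitmx.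
Proof.
move=> /p6mZ_inv [y _ [_ xy]].
have /(congr1 snd) := congr1 embed xy; rewrite embedM embed_id /=.
by case/mulmx1_unit.
Qed.

Lemma lin_real_rho_pow k : lin_real (zrho_pow k).2 = rot60 R ^+ k.
Proof.
elim: k => [|k IH]; first by rewrite /= lin_real1.
by rewrite [zrho_pow _]/= /zcomp lin_realM IH lin_real_rot exprS mulmxE.
Qed.

Lemma in_D6E (X : 'M[R]_2) : in_D6 X <-> exists2 A, A \in D6Z & X = lin_real A.
Proof.
split.
  case=> [[k k6] [->|->]]; rewrite -lin_real_rho_pow.
    by exists (zrho_pow k).2 => //; apply: p6mZ_rho_pow.
  exists (zcomp (zrho_pow k) zsig).2; first exact: p6mZ_comp (p6mZ_rho_pow k) _.
  by rewrite /zcomp /= lin_realM lin_real_refl.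
move=> [A /D6Z_rho_sig [k k6 AE] ->]; exists (Ordinal k6).
rewrite -lin_real_rho_pow -lin_real_refl -lin_realM.
by case: AE => /(congr1 snd) /= ->; [left | right].
Qed.

Lemma p6mE g : M g <-> exists2 x, in_p6mZ x & g = embed x.
Proof.
split.
  case: g => a A [[m [n /= ->]] /in_D6E [B hB /= ->]]; by exists ((m, n), B).
case=> [[[m n] B] hB ->]; split; first by exists m, n.
by apply/in_D6E; exists B.
Qed.

Lemma p6m_embed x : in_p6mZ x -> M (embed x).
Proof. by move=> hx; apply/p6mE; exists x. Qed.

Lemma p6m_comp g h : M g -> M h -> M (acomp g h).
Proof.
move=> /p6mE [x hx ->] /p6mE [y hy ->]; rewrite -embedM.
by apply: p6m_embed; apply: p6mZ_comp.
Qed.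

Lemma p6m_unit g : M g -> g.2 \in unitmx.
Proof. by move=> /p6mE [x hx ->]; apply: embed_unit. Qed.

Lemma p6m_inv g : M g -> M (ainv g).
Proof.
move=> /p6mE [x hx ->]; have [y hy [_ xy]] := p6mZ_inv hx.
have : acomp (embed x) (embed y) = aid R by rewrite -embedM xy embed_id.
by move/(ainv_uniq (embed_unit hx)) <-; apply: p6m_embed.
Qed.

Lemma p6m_id : M (aid R).
Proof. by rewrite -embed_id; apply: p6m_embed. Qed.

Lemma p6m_conj h g : M h -> M g -> M (conj h g).
Proof. by move=> hh hg; apply: p6m_comp; [apply: p6m_comp | apply: p6m_inv]. Qed.

Lemma p6m_NA h : M h -> in_NA M h.
Proof.
move=> hh; split=> [|g]; first exact: p6m_unit.
split; first exact: p6m_conj.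
by move=> hc; rewrite -(conjVK g (p6m_unit hh)); apply: p6m_conj => //; apply: p6m_inv.
Qed.

Lemma is_aut_zaut phi : is_aut M phi ->
  exists2 psi, zaut psi & forall x, in_p6mZ x -> embed (psi x) = phi (embed x).
Proof.
case=> phi_in [phi_inj [phi_surj phiM]].
pose P x y := in_p6mZ x -> in_p6mZ y /\ embed y = phi (embed x).
have [psi psiP] : {psi & forall x, P x (psi x)}.
  apply: choice => x; rewrite /P.
  case: (boolP (in_p6mZ x)) => hx; last by exists x; rewrite (negbTE hx).
  by have /p6mE [y hy ->] := phi_in _ (p6m_embed hx); exists y.
exists psi => [|x /psiP [] //]; split.
- by move=> x /psiP [].
- move=> x y hx hy /(congr1 embed); rewrite (proj2 (psiP x hx)) (proj2 (psiP y hy)).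
  by move/phi_inj => /(_ (p6m_embed hx) (p6m_embed hy)) /embed_inj.
- move=> y hy; have [g [/p6mE [x hx ->] gy]] := phi_surj _ (p6m_embed hy).
  by exists x => //; apply: embed_inj; rewrite (proj2 (psiP x hx)).
- move=> x y hx hy; apply: embed_inj; have hxy := p6mZ_comp hx hy.
  rewrite (proj2 (psiP _ hxy)) !embedM (proj2 (psiP x hx)) (proj2 (psiP y hy)).
  exact: phiM (p6m_embed hx) (p6m_embed hy).
Qed.

Theorem p6m_aut_inner phi : is_aut M phi ->
  exists2 h, M h & forall g, M g -> phi g = conj h g.
Proof.
move=> /is_aut_zaut [psi psiA psiE]; have [h hh inner] := zaut_inner psiA.
exists (embed h); first exact: p6m_embed.
move=> g /p6mE [x hx ->]; rewrite -psiE // /conj.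
by rewrite -embedM -inner // embedM acompA acompV ?acompf1 ?embed_unit.
Qed.

Lemma p6m_centralizer f :
  f.2 \in unitmx -> (forall g, M g -> conj f g = g) -> f = aid R.
Proof.
move=> hf central.
have commute g : M g -> acomp f g = acomp g f.
  by move=> hg; rewrite -[in RHS](central g hg) /conj acompA acompVl // acompf1.
case: f {hf central} commute => a A commute.
have fix_lat v : A *m lat_pt v = lat_pt v.
  have := commute _ (p6m_embed (p6mZ_tr v)).
  rewrite /embed /acomp /= lin_real1 !mul1mx mulmx1 => -[].
  by rewrite addrC => /addIr.
have A1 : A = 1%:M.
  by apply: fix_lattice_basis; [move: (fix_lat (1, 0)) | move: (fix_lat (0, 1))];
    rewrite /lat_pt /= ?scale1r ?scale0r ?addr0 ?add0r.
have := commute _ (p6m_embed (erefl : in_p6mZ zrho)).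
rewrite /embed /acomp /= A1 lat_pt0 lin_real_rot !mul1mx add0r addr0.
by case=> /esym /rot60_fix ->.
Qed.

Lemma in_NA_is_aut (N : affmap R -> Prop) f : in_NA N f -> is_aut N (conj f).
Proof.
case=> hf nf; split; first by move=> g /nf.
split; first by move=> g h _ _ e; rewrite -(conjVK g hf) e conjVK.
split; last by move=> g h _ _; rewrite conj_acomp.
move=> h hh; exists (conj (ainv f) h); rewrite conjKV //.
by split => //; apply/nf; rewrite conjKV.
Qed.

Theorem p6m_normalizer f : in_NA M f -> M f.
Proof.
move=> nf; have hf := proj1 nf.
have [h hh inner] := p6m_aut_inner (in_NA_is_aut nf).
have hu := p6m_unit hh.
have /p6m_centralizer hfh : (acomp (ainv h) f).2 \in unitmx.
  by apply: acomp_unit; rewrite ?ainv_unit.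
suff /hfh hf1 : forall g, M g -> conj (acomp (ainv h) f) g = g.
  by rewrite -[f]acomp1f -(acompV hu) acompA hf1 acompf1.
by move=> g hg; rewrite conjM ?ainv_unit // inner // conjVK.
Qed.

Lemma orbit_p6m f x : M f -> Defs.orbit M (app f x) = Defs.orbit M x.
Proof.
move=> hf; apply: funext => y; apply: propext; split.
  case=> g [hg ->]; exists (acomp g f).
  by rewrite app_acomp; split => //; apply: p6m_comp.
case=> g [hg ->]; exists (acomp g (ainv f)).
split; first by apply: p6m_comp => //; apply: p6m_inv.
by rewrite -app_acomp acompA acompVl ?acompf1 // p6m_unit.
Qed.

Lemma induces_p6m f : M f -> induces f (@id (orbifold M)).
Proof. by move=> hf x; apply: eq_exist; rewrite orbit_p6m. Qed.

Lemma induces_p6m_id f (F : orbifold M -> orbifold M) : M f -> induces f F -> F = id.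
Proof.
move=> hf fF; apply: funext => -[O [x Ox]]; subst O.
by rewrite -[exist _ _ _]/(cls M x) fF (induces_p6m hf x).
Qed.
End P6m.

Theorem lemma1 (R : realType) :
  (* Sym(M) = {idt} *)
  (forall F, Sym (@p6m R) F <-> F = id) /\
  (* Aff(M) = {idt} *)
  (forall F, Aff (@p6m R) F <-> F = id) /\
  (* Omega : Aff(M) -> Out(M), (a+A)_* |-> [g |-> (a+A) g (a+A)^-1],
     is well defined, *)
  (forall f1 f2 (F : orbifold (@p6m R) -> orbifold (@p6m R)), in_NA (@p6m R) f1 -> in_NA (@p6m R) f2 ->
     induces f1 F -> induces f2 F ->
     out_eq (@p6m R) (conj f1) (conj f2)) /\
  (* a homomorphism, *)
  (forall f1 f2, in_NA (@p6m R) f1 -> in_NA (@p6m R) f2 ->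
     out_eq (@p6m R) (conj (acomp f1 f2)) (fun g => conj f1 (conj f2 g))) /\
  (* injective, *)
  (forall f, in_NA (@p6m R) f -> out_eq (@p6m R) (conj f) id ->
     induces f (@id (orbifold (@p6m R)))) /\
  (* and surjective onto Out(M). *)
  (forall phi, is_aut (@p6m R) phi ->
     exists f, in_NA (@p6m R) f /\ out_eq (@p6m R) (conj f) phi).
Proof.
have aidNA : in_NA (@p6m R) (aid R) := p6m_NA p6m_id.
have aid_id : induces (aid R) (@id (orbifold (@p6m R))) := induces_p6m p6m_id.
split.
  move=> F; split=> [[f [/p6m_normalizer nf [_ fF]]] | ->]; first exact: induces_p6m_id fF.
  by exists (aid R); rewrite /is_isometry /= trmx1 mulmx1.
split.
  move=> F; split=> [[f [/p6m_normalizer nf fF]] | ->]; first exact: induces_p6m_id fF.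
  by exists (aid R).
split.
  move=> f1 f2 F /p6m_normalizer n1 /p6m_normalizer n2 _ _.
  exists (acomp f1 (ainv f2)); split; first by apply: p6m_comp => //; apply: p6m_inv.
  move=> g _; rewrite -conjM ?acomp_unit ?ainv_unit ?p6m_unit //.
  by rewrite acompA acompVl ?acompf1 ?p6m_unit.
split.
  move=> f1 f2 [u1 _] [u2 _]; exists (aid R); split; first exact: p6m_id.
  by move=> g _; rewrite conj_aid conjM.
split; first by move=> f /p6m_normalizer nf _; apply: induces_p6m.
move=> phi /p6m_aut_inner [h hh inner]; exists h; split; first exact: p6m_NA.
by exists (aid R); split => [|g hg]; rewrite ?conj_aid ?inner //; apply: p6m_id.
Qed.
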